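(* Let $\Theta$ be an open saturated branch of a tableau in $\mathbf{TAB}_{\mathbf{IB}}$ with root formula $@_{i_0}\varphi_0$, let $\mathcal{M}^\Theta=(W^\Theta,R^\Theta,V^\Theta)$ be its model, $W^\Theta_r=\{w\in W^\Theta\mid wR^\Theta w\}$, and $\mathcal{M}^\Theta_B$ the bulldozed model of $\mathcal{M}^\Theta$. Let $i$ be an identity urfather on $\Theta$ and $\varphi$ a formula such that $@_i\varphi$ is a quasi-subformula of $@_{i_0}\varphi_0$. Then $\mathcal{M}^\Theta,i\models\varphi$ if and only if $\mathcal{M}^\Theta_B,i_B\models\varphi$, where $i_B=(i,0)$ if $i\in W^\Theta_r$ and $i_B=i$ otherwise.
   Context: Hybrid language: fix disjoint countably infinite sets $\mathbf{Prop}$ (propositional variables) and $\mathbf{Nom}$ (nominals). Formulas: $\varphi ::= p \mid i \mid \neg\varphi \mid \varphi\land\varphi \mid \Diamond\varphi \mid @_i\varphi$ with $p\in\mathbf{Prop}$, $i\in\mathbf{Nom}$; $\Box\varphi$ abbreviates $\neg\Diamond\neg\varphi$. A model $\mathcal{M}=(W,R,V)$ has $W$ nonempty, $R\subseteq W\times W$, and $V:\mathbf{Prop}\cup\mathbf{Nom}\to\mathcal{P}(W)$ with $V(i)=\{i^V\}$ a singleton for each nominal $i$. Satisfaction: $\mathcal{M},w\models p$ iff $w\in V(p)$; $\mathcal{M},w\models i$ iff $w=i^V$; Boolean clauses as usual; $\mathcal{M},w\models\Diamond\varphi$ iff there is $v$ with $wRv$ and $\mathcal{M},v\models\varphi$;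 $\mathcal{M},w\models @_i\varphi$ iff $\mathcal{M},i^V\models\varphi$. Tableau calculus $\mathbf{TAB}_{\mathbf{IB}}$. A tableau is a well-founded tree whose nodes are formulas of the form $@_i\varphi$; its root is a formula $@_i\varphi$ (the root formula) where $i$ does not occur in $\varphi$. A branch is a maximal path; $\varphi\in\Theta$ means $\varphi$ occurs on branch $\Theta$. Each branch is extended by applying the rules below to its formulas as often as possible, except that no further formula is added to a branch once either (i) every new formula generated by applying any rule already occurs on the branch, or (ii) the branch is closed, i.e. contains $@_i\varphi$ and $@_i\neg\varphi$ for some formula $\varphi$ and nominal $i$. Open means not closed. A branch is saturated if every new formula generated by applying some rule already occurs on it. An accessibility formula is a formula $@_i\Diamond j$ added by rule $[\Diamond]$ (with $j$ the new nominal). Rules (premises already on the branch; conclusions added to it): [$\neg\neg$] from $@_i\neg\neg\varphi$ add $@_i\varphi$; [$\land$] from $@_i(\varphi\land\psi)$ add $@_i\varphi$ and $@_i\psi$; [$\neg\land$] from $@_i\neg(\varphi\land\psi)$ split the branch into one extended by $@_i\neg\varphi$ and one extended by $@_i\neg\psi$; [$\Diamond$] from $@_i\Diamond\varphi$, which is not an accessibility formula, add $@_i\Diamond j$ and $@_j\varphi$ where $j$ is a nominal not occurring on the branch; this rule is applied at most once per formula, and only if $i$ is a quasi-urfather on the branch (defined below); [$\neg\Diamond$] from $@_i\neg\Diamond\varphi$ and $@_i\Diamond j$ add $@_j\neg\varphi$; [$\Box_{sym}$] from $@_i\Box\varphi$ and $@_j\Diamond i$ add $@_j\varphi$; [$@$]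 from $@_i@_j\varphi$ add $@_j\varphi$; [$\neg@$] from $@_i\neg@_j\varphi$ add $@_j\neg\varphi$; [$Id$] from $@_i\varphi$, which is not an accessibility formula, and $@_i j$ add $@_j\varphi$; [$Ref$] for any nominal $i$ occurring on the branch add $@_i i$; ($\mathcal{I}$) for any nominal $i$ occurring on the branch add $@_i\neg\Diamond i$. Auxiliary notions for a branch $\Theta$. $@_i\varphi$ is a quasi-subformula of $@_j\psi$ if $\varphi$ is a subformula of $\psi$, or $\varphi=\neg\chi$ with $\chi$ a subformula of $\psi$. For a nominal $i$ occurring in $\Theta$, $T^\Theta(i)=\{\varphi \mid @_i\varphi\in\Theta$ and $@_i\varphi$ is a quasi-subformula of the root formula$\}$. Nominals $i,j$ are twins if $T^\Theta(i)=T^\Theta(j)$. $i\prec_\Theta j$ if $j$ was introduced by applying $[\Diamond]$ to a formula $@_i\Diamond\varphi$; $\prec_\Theta^*$ is its reflexive transitive closure. A nominal $i$ is a quasi-urfather on $\Theta$ if there are no twins $j\neq k$ with $j\prec_\Theta^* i$ and $k\prec_\Theta^* i$. The identity urfather $v_\Theta(i)$ of a nominal $i$ occurring in $\Theta$ is the earliest introduced nominal $j$ on $\Theta$ such that $j$ is a twin of $i$ and $j$ is a quasi-urfather; it may fail to exist, and $\mathrm{dom}(v_\Theta)$ denotes the set of nominals for which it exists. A nominal is called an identity urfather on $\Theta$ if it is the identity urfather of some nominal (equivalently $v_\Theta(i)=i$). The model $\mathcal{M}^\Theta=(W^\Theta,R^\Theta,V^\Theta)$ of an open saturated branch $\Theta$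 with root formula $@_{i_0}\varphi_0$: $W^\Theta$ is the set of identity urfathers on $\Theta$; $R^\Theta=\{(v_\Theta(i),v_\Theta(j)) \mid @_i\Diamond j\in\Theta,\ i,j\in\mathrm{dom}(v_\Theta)\}\cup\{(v_\Theta(j),v_\Theta(i)) \mid @_i\Diamond j\in\Theta,\ i,j\in\mathrm{dom}(v_\Theta)\}$; $V^\Theta(p)=\{v_\Theta(i)\mid @_i p\in\Theta\}$ for $p\in\mathbf{Prop}$; for a nominal $i$, $V^\Theta(i)=\{v_\Theta(i)\}$ if $i\in\mathrm{dom}(v_\Theta)$ and $V^\Theta(i)=\{i_0\}$ otherwise. Bulldozed model: given a model $\mathcal{M}=(W,R,V)$, let $W_r=\{w\in W\mid wRw\}$, $W^-=W\setminus W_r$, and $W_B=W^-\cup\{(w,n)\mid w\in W_r,\ n\in\{0,1\}\}$. Let $\alpha:W_B\to W$ be $\alpha(w)=w$ for $w\in W^-$ and $\alpha((w,n))=w$. Define $wR_Bv$ iff one of: ($w\in W^-$ or $v\in W^-$) and $\alpha(w)R\alpha(v)$; or $w=(w',m)$, $v=(v',n)$, $w'\neq v'$ and $w'Rv'$; or $w\neq v$ and $\alpha(w)=\alpha(v)$. Define $V_B(p)=\{w\in W_B\mid\alpha(w)\in V(p)\}$ for $p\in\mathbf{Prop}$; for a nominal $i$, $V_B(i)=\{(i^V,0)\}$ if $i^V\in W_r$, and $V_B(i)=V(i)$ otherwise. The bulldozed model is $\mathcal{M}_B=(W_B,R_B,V_B)$; $\mathcal{M}^\Theta_B$ denotes the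 bulldozed model of $\mathcal{M}^\Theta$. *)

From Stdlib Require Import List Arith Relation_Operators ClassicalEpsilon.
Import ListNotations.

Inductive form : Type :=
| Prop_ (p : nat)
| Nom (i : nat)
| Neg (f : form)
| And (f g : form)
| Dia (f : form)
| At (i : nat) (f : form).

Definition Box (f : form) : form := Neg (Dia (Neg f)).

Inductive subf : form -> form -> Prop :=
| subf_refl f : subf f f
| subf_neg f g : subf f g -> subf f (Neg g)
| subf_andl f g h : subf f g -> subf f (And g h)
| subf_andr f g h : subf f h -> subf f (And g h)
| subf_dia f g : subf f g -> subf f (Dia g)
| subf_at f i g : subf f g -> subf f (At i g).

(* @_i phi is a quasi-subformula of @_j psi  (depends only on phi, psi) *)
Definition qsub (phi psi : form) : Prop :=
  subf phi psi \/ exists chi, phi = Neg chi /\ subf chi psi.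

Fixpoint noms (f : form) : list nat :=
  match f with
  | Prop_ _ => []
  | Nom i => [i]
  | Neg g => noms g
  | And g h => noms g ++ noms h
  | Dia g => noms g
  | At i g => i :: noms g
  end.

(* Models.  Worlds are the elements of [carrier] satisfying [world].       *)
Record model : Type := Model {
  carrier : Type;
  world : carrier -> Prop;
  rel : carrier -> carrier -> Prop;
  vprop : nat -> carrier -> Prop;
  vnom : nat -> carrier   (* V(i) = {vnom i} *)
}.

Fixpoint sat (M : model) (w : carrier M) (f : form) : Prop :=
  match f with
  | Prop_ p => vprop M p w
  | Nom i => w = vnom M i
  | Neg g => ~ sat M w g
  | And g h => sat M w g /\ sat M w h
  | Dia g => exists v, world M v /\ rel M w v /\ sat M v g
  | At i g => sat M (vnom M i) g
  end.

(* Branches.  A branch is its root formula @_{root_nom} root_form followed by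
   the sequence of rule applications performed on it (in order).           *)
Inductive step : Type :=
| SDia (i : nat) (phi : form) (j : nat)
    (* rule [Dia] applied to @_i Dia phi with new nominal j:
       adds @_i Dia j (an accessibility formula) and @_j phi *)
| SAdd (f : form).
    (* a formula added by one of the other rules *)

Record branch : Type := Branch {
  root_nom : nat;
  root_form : form;
  steps : list step
}.

Definition step_forms (s : step) : list form :=
  match s with
  | SDia i phi j => [At i (Dia (Nom j)); At j phi]
  | SAdd f => [f]
  end.

Definition forms (B : branch) : list form :=
  At (root_nom B) (root_form B) :: flat_map step_forms (steps B).

Definition on (B : branch) (f : form) : Prop := In f (forms B).

Definition prefix (B : branch) (n : nat) : branch :=
  Branch (root_nom B) (root_form B) (firstn n (steps B)).

Definition occurs (B : branch) (i : nat) : Prop :=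
  In i (flat_map noms (forms B)).

Definition acc (B : branch) (f : form) : Prop :=
  exists i phi j, In (SDia i phi j) (steps B) /\ f = At i (Dia (Nom j)).

Definition prec (B : branch) (i j : nat) : Prop :=
  exists phi, In (SDia i phi j) (steps B).

Definition prec_star (B : branch) : nat -> nat -> Prop :=
  clos_refl_trans nat (prec B).

Definition T (B : branch) (i : nat) (phi : form) : Prop :=
  on B (At i phi) /\ qsub phi (root_form B).

Definition twins (B : branch) (i j : nat) : Prop :=
  forall phi, T B i phi <-> T B j phi.

Definition quasi_urfather (B : branch) (i : nat) : Prop :=
  ~ exists j k, j <> k /\ prec_star B j i /\ prec_star B k i /\ twins B j k.

Definition closed (B : branch) : Prop :=
  exists i phi, on B (At i phi) /\ on B (At i (Neg phi)).

(* conclusions of the non-branching rules other than [Dia] *)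
Definition concl_nb (B : branch) (f : form) : Prop :=
  (exists i phi, on B (At i (Neg (Neg phi))) /\ f = At i phi)
  \/ (exists i phi psi, on B (At i (And phi psi)) /\
                         (f = At i phi \/ f = At i psi))
  \/ (exists i phi j, on B (At i (Neg (Dia phi))) /\ on B (At i (Dia (Nom j)))
                      /\ f = At j (Neg phi))
  \/ (exists i phi j, on B (At i (Box phi)) /\ on B (At j (Dia (Nom i)))
                      /\ f = At j phi)
  \/ (exists i j phi, on B (At i (At j phi)) /\ f = At j phi)
  \/ (exists i j phi, on B (At i (Neg (At j phi))) /\ f = At j (Neg phi))
  \/ (exists i j phi, on B (At i phi) /\ ~ acc B (At i phi) /\
                      on B (At i (Nom j)) /\ f = At j phi)
  \/ (exists i, occurs B i /\ f = At i (Nom i))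
  \/ (exists i, occurs B i /\ f = At i (Neg (Dia (Nom i)))).

Definition dia_applicable (B : branch) (i : nat) (phi : form) : Prop :=
  on B (At i (Dia phi)) /\ ~ acc B (At i (Dia phi)) /\
  (~ exists j, In (SDia i phi j) (steps B)) /\ quasi_urfather B i.

Definition saturated (B : branch) : Prop :=
  (forall f, concl_nb B f -> on B f)
  /\ (forall i phi psi, on B (At i (Neg (And phi psi))) ->
        on B (At i (Neg phi)) \/ on B (At i (Neg psi)))
  /\ (forall i phi, ~ dia_applicable B i phi).

Definition valid_step (B : branch) (s : step) : Prop :=
  match s with
  | SDia i phi j => dia_applicable B i phi /\ ~ occurs B j
  | SAdd f =>
      ~ on B f /\
      (concl_nb B f \/
       exists i phi psi, on B (At i (Neg (And phi psi))) /\
                         (f = At i (Neg phi) \/ f = At i (Neg psi)))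
  end.

Definition is_branch (B : branch) : Prop :=
  ~ In (root_nom B) (noms (root_form B)) /\
  forall n s, nth_error (steps B) n = Some s ->
    ~ closed (prefix B n) /\ ~ saturated (prefix B n) /\ valid_step (prefix B n) s.

(* order of introduction: first occurrence in the nominal sequence of the
   branch (root nominal first, then the root formula left to right, then the
   nominals introduced by [Dia]) *)
Definition introduced_no_later (B : branch) (i j : nat) : Prop :=
  exists m, nth_error (flat_map noms (forms B)) m = Some i /\
    forall m', nth_error (flat_map noms (forms B)) m' = Some j -> m <= m'.

(* v_B(i) = j *)
Definition idurf_of (B : branch) (i j : nat) : Prop :=
  occurs B i /\ occurs B j /\ twins B j i /\ quasi_urfather B j /\
  forall k, occurs B k -> twins B k i -> quasi_urfather B k ->
    introduced_no_later B j k.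

Definition in_dom (B : branch) (i : nat) : Prop := exists j, idurf_of B i j.

Definition identity_urfather (B : branch) (i : nat) : Prop := idurf_of B i i.

Definition branch_model (B : branch) : model :=
  Model nat
    (identity_urfather B)
    (fun a b => exists i j, on B (At i (Dia (Nom j))) /\ in_dom B i /\ in_dom B j /\
        ((idurf_of B i a /\ idurf_of B j b) \/ (idurf_of B j a /\ idurf_of B i b)))
    (fun p w => exists i, on B (At i (Prop_ p)) /\ idurf_of B i w)
    (fun i => epsilon (inhabits 0)
       (fun w => idurf_of B i w \/ (~ in_dom B i /\ w = root_nom B))).

(* Bulldozing. W_B = W^- ⊎ (W_r × {0,1}) encoded as inl / inr; 0 = false. *)
Definition bd_carrier (M : model) : Type := (carrier M + (carrier M * bool))%type.

Definition alpha (M : model) (x : bd_carrier M) : carrier M :=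
  match x with inl w => w | inr (w, _) => w end.

Definition in_minus (M : model) (x : bd_carrier M) : Prop :=
  match x with inl _ => True | inr _ => False end.

Definition bd_pt (M : model) (w : carrier M) : bd_carrier M :=
  if excluded_middle_informative (rel M w w) then inr (w, false) else inl w.

Definition bulldoze (M : model) : model :=
  Model (bd_carrier M)
    (fun x => match x with
              | inl w => world M w /\ ~ rel M w w
              | inr (w, _) => world M w /\ rel M w w
              end)
    (fun x y =>
       ((in_minus M x \/ in_minus M y) /\ rel M (alpha M x) (alpha M y))
       \/ (exists w' m v' n, x = inr (w', m) /\ y = inr (v', n) /\ w' <> v' /\ rel M w' v')
       \/ (x <> y /\ alpha M x = alpha M y))
    (fun p x => vprop M p (alpha M x))
    (fun i => bd_pt M (vnom M i)).

(* The map alpha from the bulldozed model onto the original one is a bounded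
   morphism, so it preserves every formula whose nominals name irreflexive
   worlds: bulldozing only duplicates reflexive worlds, and those are the only
   ones whose name changes meaning.  In the branch model a nominal k of the
   root formula does name an irreflexive world: a loop at v(k) comes from an
   accessibility formula @_a Dia b with a and b twins of k, so @_a k and @_b k
   are on the branch, and the rules [Ref], [Id], (I) and [neg Dia] then derive
   @_b neg k, closing the branch. *)
From Stdlib Require Import List Operators_Properties
  Wf_nat ClassicalEpsilon Classical.

Lemma subf_trans f g h : subf f g -> subf g h -> subf f h.
Proof.
  intros Hfg Hgh; induction Hgh; auto using subf.
Qed.

Lemma subf_noms f g k : subf f g -> In k (noms f) -> In k (noms g).
Proof.
  intros H Hk; induction H; simpl; auto using in_or_app.
Qed.

Section Bulldozing.

Variable M : model.

Notation MB := (bulldoze M).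

Lemma alpha_bd_pt w : alpha M (bd_pt M w) = w.
Proof. unfold bd_pt; destruct (excluded_middle_informative _); reflexivity. Qed.

Lemma world_bd_pt w : world M w -> world MB (bd_pt M w).
Proof. intro H; unfold bd_pt; destruct (excluded_middle_informative _); simpl; auto. Qed.

Lemma bd_pt_irrefl w : ~ rel M w w -> bd_pt M w = inl w.
Proof. intro H; unfold bd_pt; destruct (excluded_middle_informative _); tauto. Qed.

Lemma world_alpha x : world MB x -> world M (alpha M x).
Proof. destruct x as [u|[u m]]; simpl; tauto. Qed.

Lemma rel_alpha x y :
  world MB x -> world MB y -> rel MB x y -> rel M (alpha M x) (alpha M y).
Proof.
  intros Hx Hy [[_ Hr]|[(u & m & v & n & -> & -> & _ & Hr)|[Hxy Ha]]]; auto.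
  rewrite <- Ha.
  destruct x as [u|[u m]], y as [v|[v n]]; simpl in *; subst; tauto.
Qed.

Lemma rel_alpha_lift x v :
  world MB x -> world M v -> rel M (alpha M x) v ->
  exists y, world MB y /\ rel MB x y /\ alpha M y = v.
Proof.
  intros Hx Hv Hr.
  destruct (classic (rel M v v)) as [Hvv|Hvv].
  - destruct x as [u|[u m]].
    + exists (inr (v, false)); simpl; auto 6.
    + destruct (classic (u = v)) as [<-|Huv].
      * exists (inr (u, negb m)); simpl; split; [tauto|split; auto].
        right; right; split; auto.
        intro E; injection E; destruct m; discriminate.
      * exists (inr (v, false)); simpl; split; [tauto|split; auto].
        right; left; exists u, m, v, false; auto.
  - exists (inl v); simpl; auto 6.
Qed.

Lemma bd_pt_eq_alpha x w :
  world MB x -> ~ rel M w w -> x = bd_pt M w <-> alpha M x = w.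
Proof.
  intros Hx Hw; rewrite bd_pt_irrefl by exact Hw.
  destruct x as [u|[u m]]; simpl in *; split; intro E; try congruence.
  subst; tauto.
Qed.

Lemma sat_bulldoze g :
  (forall k, In k (noms g) -> world M (vnom M k)) ->
  (forall k, subf (Nom k) g -> ~ rel M (vnom M k) (vnom M k)) ->
  forall x, world MB x -> sat MB x g <-> sat M (alpha M x) g.
Proof.
  induction g as [p|k|g IH|g IHg h IHh|g IH|j g IH]; simpl;
    intros Hworld Hirr x Hx.
  - reflexivity.
  - apply bd_pt_eq_alpha; auto using subf.
  - rewrite IH; auto using subf; tauto.
  - rewrite IHg, IHh; auto using subf, in_or_app; tauto.
  - split.
    + intros (y & Hy & Hr & Hg).
      exists (alpha M y); repeat split; auto using world_alpha, rel_alpha.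
      apply IH; auto using subf.
    + intros (v & Hv & Hr & Hg).
      destruct (rel_alpha_lift x v Hx Hv Hr) as (y & Hy & Hxy & <-).
      exists y; repeat split; auto.
      apply IH; auto using subf.
  - rewrite IH, alpha_bd_pt; auto using subf, world_bd_pt; tauto.
Qed.

End Bulldozing.

Lemma occurs_on B f k : on B f -> In k (noms f) -> occurs B k.
Proof. intros Hf Hk; apply in_flat_map; eauto. Qed.

Lemma occurs_root_noms B k : In k (noms (root_form B)) -> occurs B k.
Proof. intro Hk; apply (occurs_on B (At (root_nom B) (root_form B))); now left + right. Qed.

Section BranchModel.

Variable B : branch.

Lemma not_acc_At i f : (forall j, f <> Dia (Nom j)) -> ~ acc B (At i f).
Proof. intros Hf (i' & phi & j & _ & E); injection E; intros; subst; eapply Hf; eauto. Qed.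

Section Saturation.

Hypothesis saturated_B : saturated B.

Lemma on_ref i : occurs B i -> on B (At i (Nom i)).
Proof. intro Hi; apply saturated_B; do 7 right; left; eauto. Qed.

Lemma on_irrefl i : occurs B i -> on B (At i (Neg (Dia (Nom i)))).
Proof. intro Hi; apply saturated_B; do 8 right; eauto. Qed.

Lemma on_id i j f :
  on B (At i f) -> ~ acc B (At i f) -> on B (At i (Nom j)) -> on B (At j f).
Proof. intros; apply saturated_B; do 6 right; left; eauto 7. Qed.

Lemma on_neg_dia i j f :
  on B (At i (Neg (Dia f))) -> on B (At i (Dia (Nom j))) -> on B (At j (Neg f)).
Proof. intros; apply saturated_B; do 2 right; left; eauto 7. Qed.

Lemma closed_of_loop a b k :
  on B (At a (Dia (Nom b))) -> on B (At a (Nom k)) -> on B (At b (Nom k)) ->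
  closed B.
Proof.
  intros Hab Hak Hbk.
  assert (Hka : on B (At k (Nom a))).
  { apply (on_id a); auto.
    - apply on_ref; apply (occurs_on _ _ _ Hab); simpl; auto.
    - apply not_acc_At; intros j; discriminate. }
  assert (Ha : on B (At a (Neg (Dia (Nom k))))).
  { apply (on_id k); auto.
    - apply on_irrefl; apply (occurs_on _ _ _ Hak); simpl; auto.
    - apply not_acc_At; intros j; discriminate. }
  exists b, (Nom k); split; eauto using on_neg_dia.
Qed.

End Saturation.

Lemma twins_refl a : twins B a a.
Proof. intro; tauto. Qed.

Lemma twins_trans a b c : twins B a b -> twins B b c -> twins B a c.
Proof. intros H H' phi; rewrite (H phi), (H' phi); tauto. Qed.

(* The identity urfather of k is found at the least position of the nominal
   sequence of the branch holding a quasi-urfather twin of k. *)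
Lemma in_dom_quasi_urfather k : occurs B k -> quasi_urfather B k -> in_dom B k.
Proof.
  intros Hk Hqk.
  set (L := flat_map noms (forms B)).
  set (Q := fun m => exists j, nth_error L m = Some j /\
              occurs B j /\ twins B j k /\ quasi_urfather B j).
  destruct (In_nth_error _ _ Hk) as [n Hn].
  destruct (dec_inh_nat_subset_has_unique_least_element Q (fun m => classic (Q m)))
    as (m & ([j (Hj & Hoj & Htj & Hqj)] & Hmin) & _).
  { exists n, k; auto using twins_refl. }
  exists j; do 4 (split; auto).
  intros k' Hok' Htk' Hqk'; exists m; split; auto.
  intros m' Hm'; apply Hmin; exists k'; auto.
Qed.

Lemma quasi_urfather_root_noms k :
  is_branch B -> In k (noms (root_form B)) -> quasi_urfather B k.
Proof.
  intros [_ Hsteps] Hk.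
  assert (Hanc : forall x, prec_star B x k -> x = k).
  { intros x Hx; apply clos_rt_rtn1 in Hx; inversion Hx as [|y z [phi Hin]]; auto.
    exfalso; apply In_nth_error in Hin as [n Hn].
    destruct (Hsteps n _ Hn) as (_ & _ & _ & Hfresh); apply Hfresh.
    apply (occurs_root_noms (prefix B n)), Hk. }
  intros (j & j' & Hne & Hj & Hj' & _); apply Hanc in Hj, Hj'; congruence.
Qed.

Lemma in_dom_root_noms k : is_branch B -> In k (noms (root_form B)) -> in_dom B k.
Proof.
  auto using in_dom_quasi_urfather, occurs_root_noms, quasi_urfather_root_noms.
Qed.

Notation MT := (branch_model B).

Lemma idurf_vnom k : in_dom B k -> idurf_of B k (vnom MT k).
Proof.
  intros [w Hw]; simpl.
  set (P := fun w => idurf_of B k w \/ (~ in_dom B k /\ w = root_nom B)).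
  destruct (epsilon_spec (inhabits 0) P) as [H|[H _]]; [exists w; left; auto|auto|].
  exfalso; apply H; exists w; auto.
Qed.

Lemma identity_urfather_idurf k w : idurf_of B k w -> identity_urfather B w.
Proof.
  intros (_ & Hw & Hwk & Hqw & Hmin); do 4 (split; auto using twins_refl).
  intros k' Hk' Hk'w Hqk'; apply Hmin; eauto using twins_trans.
Qed.

Lemma world_vnom_root k : is_branch B -> In k (noms (root_form B)) -> world MT (vnom MT k).
Proof.
  intros Hb Hk; apply (identity_urfather_idurf k), idurf_vnom, in_dom_root_noms; auto.
Qed.

Lemma vnom_root_irrefl k :
  is_branch B -> ~ closed B -> saturated B -> subf (Nom k) (root_form B) ->
  ~ rel MT (vnom MT k) (vnom MT k).
Proof.
  intros Hb Hopen Hsat Hk (a & b & Hab & _ & _ & Hloop).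
  assert (Hkr : In k (noms (root_form B))) by (apply (subf_noms _ _ _ Hk); simpl; auto).
  destruct (idurf_vnom k (in_dom_root_noms k Hb Hkr)) as (_ & _ & Hwk & _).
  assert (Hw : forall c, idurf_of B c (vnom MT k) -> on B (At c (Nom k))).
  { intros c (_ & _ & Hwc & _).
    assert (Tk : T B k (Nom k)) by (split; [apply on_ref; auto using occurs_root_noms|left; auto]).
    apply Hwc, Hwk, Tk. }
  apply Hopen, (closed_of_loop Hsat a b k Hab); apply Hw; tauto.
Qed.

Lemma sat_bulldoze_branch_model g :
  is_branch B -> ~ closed B -> saturated B -> subf g (root_form B) ->
  forall x, world (bulldoze MT) x ->
  sat (bulldoze MT) x g <-> sat MT (alpha MT x) g.
Proof.
  intros Hb Hopen Hsat Hg; apply sat_bulldoze.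
  - intros k Hk; apply world_vnom_root; eauto using subf_noms.
  - intros k Hk; apply vnom_root_irrefl; eauto using subf_trans.
Qed.

End BranchModel.

Theorem lemma13 (Th : branch) (i : nat) (phi : form) :
  is_branch Th -> ~ closed Th -> saturated Th ->
  identity_urfather Th i ->
  qsub phi (root_form Th) ->
  (sat (branch_model Th) i phi <->
   sat (bulldoze (branch_model Th)) (bd_pt (branch_model Th) i) phi).
Proof.
  intros Hb Hopen Hsat Hi Hq.
  assert (Hsub : forall g, subf g (root_form Th) ->
            sat (branch_model Th) i g <->
            sat (bulldoze (branch_model Th)) (bd_pt (branch_model Th) i) g).
  { intros g Hg.
    rewrite sat_bulldoze_branch_model, alpha_bd_pt by auto using world_bd_pt.
    reflexivity. }
  destruct Hq as [Hq|(chi & -> & Hq)]; simpl; rewrite Hsub by exact Hq; reflexivity.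
Qed.
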